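(* Let $x=(x_1^\top,\dots,x_m^\top)^\top\in\mathbb R^d$ with $x_i\in\mathbb R^{\bar d}$, and set $x_0=x_{m+1}=0\in\mathbb R^{\bar d}$. Then: (a) writing $\hat x=A^\top Ax=(\hat x_1^\top,\dots,\hat x_m^\top)^\top$ with $\hat x_i\in\mathbb R^{\bar d}$, we have $\mathrm{supp}(\hat x_i)\subset\mathrm{supp}(x_{i-1})\cup\mathrm{supp}(x_i)\cup\mathrm{supp}(x_{i+1})$ for all $i\in[1,m]$; (b) for any $\eta>0$, writing $\tilde x=\mathrm{prox}_{\eta g}(x)=(\tilde x_1^\top,\dots,\tilde x_m^\top)^\top$ with $\tilde x_i\in\mathbb R^{\bar d}$, we have $\mathrm{supp}(\tilde x_i)\subset\mathrm{supp}(x_{i-1})\cup\mathrm{supp}(x_i)\cup\mathrm{supp}(x_{i+1})$ for all $i\in[1,m]$.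
   Context: $\mathrm{supp}(z)=\{j:[z]_j\ne0\}$. Let $L_f>0$, $\beta>0$, integers $m_1\ge2$, $m_2\ge1$ with $m_1m_2$ even, $m=3m_1m_2$, $\bar d\ge5$ odd, $d=m\bar d$. $J_p\in\mathbb R^{(p-1)\times p}$ has $-1$ at $(k,k)$, $1$ at $(k,k+1)$, zero elsewhere. $\mathcal M=\{im_1:i=1,\dots,3m_2-1\}$, $\mathcal M^C=\{1,\dots,m-1\}\setminus\mathcal M$, $A=mL_f(J_{\mathcal M^C}\otimes I_{\bar d})$ with $J_{\mathcal M^C}$ the rows of $J_m$ indexed by $\mathcal M^C$. $g(x)=\beta\sum_{i\in\mathcal M}\|x_i-x_{i+1}\|_1$ and $\mathrm{prox}_{\eta g}(x)=\arg\min_{x'}\{g(x')+\frac1{2\eta}\|x'-x\|^2\}$. (In the paper $\beta$ additionally satisfies $\beta>(50\pi+1+\|A\|)\sqrt m\,\epsilon$ for a fixed $\epsilon\in(0,1)$.) *)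

From HB Require Import structures.
From mathcomp Require Import all_boot all_order all_algebra.
From mathcomp Require Import all_classical all_reals all_analysis.
From mathcomp Require Import mxtens.
Set Implicit Arguments. Unset Strict Implicit. Unset Printing Implicit Defensive.
Import Order.TTheory GRing.Theory Num.Theory.
Local Open Scope ring_scope.

Section Defs.
Variable R : realType.

Definition supp n (z : 'cV[R]_n) : {set 'I_n} := [set j | z j 0 != 0].

Definition norm2 n (z : 'cV[R]_n) : R := Num.sqrt (\sum_(j < n) z j 0 ^+ 2).
Definition norm1 n (z : 'cV[R]_n) : R := \sum_(j < n) `|z j 0|.

Definition opnorm p q (A : 'M[R]_(p, q)) : R :=
  sup [set r | exists v : 'cV[R]_q, norm2 v <= 1 /\ r = norm2 (A *m v)].

(* J_p in R^{(p-1) x p}: row k (1-based) has -1 at column k, +1 at column k+1.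
   Here with 0-based indices. *)
Definition Jmat p : 'M[R]_(p.-1, p) :=
  \matrix_(k < p.-1, j < p)
    (if val j == val k then -1 else if val j == (val k).+1 then 1 else 0).

(* M = { i*m1 : i = 1..3m2-1 } as a set of (0-based) row indices of J_m
   (row r : 'I_(m.-1) corresponds to the 1-based index r+1). *)
Definition Mset (m m1 m2 : nat) : {set 'I_(m.-1)} :=
  [set r : 'I_(m.-1) | [exists i : 'I_(3 * m2), (0 < val i)%N && (r.+1 == val i * m1)%N]].

Definition MCset (m m1 m2 : nat) : {set 'I_(m.-1)} := ~: Mset m m1 m2.

Definition JMC (m m1 m2 : nat) : 'M[R]_(#|MCset m m1 m2|, m) :=
  \matrix_(r, j) Jmat m (enum_val r) j.

Definition Amat (m m1 m2 dbar : nat) (Lf : R) :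
  'M[R]_(#|MCset m m1 m2| * dbar, m * dbar) :=
  (m%:R * Lf) *: tensmx (JMC m m1 m2) (1%:M : 'M[R]_dbar).

(* block x_i (1-based i) of x = (x_1^T,...,x_m^T)^T; x_0 = x_{m+1} = 0
   (and more generally x_i = 0 outside 1..m) *)
Definition blk (m dbar : nat) (x : 'cV[R]_(m * dbar)) (i : nat) : 'cV[R]_dbar :=
  match (if i is j.+1 then insub j else None) : option 'I_m with
  | Some k => \col_(a < dbar) x (mxtens_index (k, a)) 0
  | None => 0
  end.

Definition gfun (m m1 m2 dbar : nat) (beta : R) (x : 'cV[R]_(m * dbar)) : R :=
  beta * \sum_(r in Mset m m1 m2) norm1 (blk x (val r).+1 - blk x (val r).+2).

Definition is_prox (m m1 m2 dbar : nat) (beta eta : R) (x y : 'cV[R]_(m * dbar)) : Prop :=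
  forall y' : 'cV[R]_(m * dbar),
    gfun m1 m2 beta y + (2 * eta)^-1 * norm2 (y - x) ^+ 2
    <= gfun m1 m2 beta y' + (2 * eta)^-1 * norm2 (y' - x) ^+ 2.

End Defs.

Arguments Amat {R} m m1 m2 dbar Lf.
Arguments JMC {R} m m1 m2.
Arguments Mset m m1 m2.
Arguments MCset m m1 m2.

From HB Require Import structures.
From mathcomp Require Import all_boot all_order all_algebra.
From mathcomp Require Import all_classical all_reals all_analysis.
From mathcomp Require Import mxtens.
From mathcomp Require Import zify.
Set Implicit Arguments. Unset Strict Implicit. Unset Printing Implicit Defensive.
Import Order.TTheory GRing.Theory Num.Theory.
Local Open Scope ring_scope.

(* (a) A^T A = (m L_f)^2 (J_{M^C}^T J_{M^C} (x) I), and J_{M^C}^T J_{M^C} is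
   tridiagonal because every row of J_m is supported on two adjacent columns.
   (b) The terms of g couple blocks j, j+1 only for j in M, and as 2 <= m1 no
   two couplings are consecutive, so the blocks tied to block i form a set
   closed under coupling.  If coordinate a of x vanishes on blocks i-1, i, i+1,
   zeroing coordinate a of the prox on that set does not increase g (every
   coupled pair is zeroed on both sides or on neither) and strictly decreases
   the distance to x unless the prox already vanishes there. *)

Section BlockSupports.
Variable R : realType.

Lemma supp_subsetU3 n (u v w z : 'cV[R]_n) :
  (forall a, u a 0 = 0 -> v a 0 = 0 -> w a 0 = 0 -> z a 0 = 0) ->
  supp z \subset supp u :|: supp v :|: supp w.
Proof.
move=> uvwz; apply/fintype.subsetP => a; rewrite !inE; apply: contraR.
by rewrite !negb_or => /andP[/andP[/negPn/eqP u0 /negPn/eqP v0] /negPn/eqP w0]; rewrite uvwz.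
Qed.

Lemma blkE m d (x : 'cV[R]_(m * d)) (k : 'I_m) a :
  blk x k.+1 a 0 = x (mxtens_index (k, a)) 0.
Proof.
rewrite /blk; case: insubP => [k' _ k'k|]; last by rewrite ltn_ord.
by rewrite mxE; congr (x (mxtens_index (_, a)) 0); exact: val_inj.
Qed.

Lemma blk_index m i : (1 <= i <= m)%N -> exists k : 'I_m, i = k.+1.
Proof. by case: i => // i im; exists (Ordinal im). Qed.

Definition adjacent_support n p (J : 'M[R]_(n, p)) : Prop :=
  forall e j j', J e j != 0 -> J e j' != 0 -> (j <= j'.+1)%N.

Lemma gram_neq0_near n p (J : 'M[R]_(n, p)) (j j' : 'I_p) :
  adjacent_support J -> (J^T *m J) j j' != 0 -> ((j' <= j.+1) && (j <= j'.+1))%N.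
Proof.
move=> adjJ; apply: contraNT => far; rewrite mxE big1 // => e _; rewrite mxE.
have [-> | Jj] := eqVneq (J e j) 0; first by rewrite mul0r.
have [-> | Jj'] := eqVneq (J e j') 0; first by rewrite mulr0.
by move: far; rewrite (adjJ _ _ _ Jj Jj') (adjJ _ _ _ Jj' Jj).
Qed.

Lemma Jmat_adjacent_support p : adjacent_support (Jmat R p).
Proof.
have Jnz e (j : 'I_p) : Jmat R p e j != 0 -> (j == e :> nat) || (j == e.+1 :> nat).
  by rewrite mxE /=; case: ifP => [/eqP|_]; [lia | case: ifP => [/eqP|]]; [lia | rewrite eqxx].
by move=> e j j' /Jnz Jj /Jnz Jj'; lia.
Qed.

Lemma JMC_adjacent_support m m1 m2 : adjacent_support (JMC m m1 m2 : 'M[R]_(_, _)).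
Proof.
have JMCE e j : JMC m m1 m2 e j = Jmat R m (enum_val e) j by rewrite mxE.
by move=> e j j'; rewrite !JMCE; exact: Jmat_adjacent_support.
Qed.

Lemma Amat_gram m m1 m2 d Lf :
  (Amat m m1 m2 d Lf)^T *m Amat m m1 m2 d Lf
  = (m%:R * Lf) ^+ 2 *: ((JMC m m1 m2)^T *m JMC m m1 m2 *t (1%:M : 'M[R]_d)).
Proof.
rewrite /Amat [_^T]linearZ /= -scalemxAl -scalemxAr scalerA -expr2.
by rewrite trmx_tens tensmx_mul trmx1 mul1mx.
Qed.

Lemma tens1_mulmxE m n d (M : 'M[R]_(m, n)) (x : 'cV[R]_(n * d)) k a :
  ((M *t (1%:M : 'M[R]_d)) *m x) (mxtens_index (k, a)) 0
  = \sum_k' M k k' * x (mxtens_index (k', a)) 0.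
Proof.
pose F k' b := (M *t (1%:M : 'M[R]_d)) (mxtens_index (k, a)) (mxtens_index (k', b))
               * x (mxtens_index (k', b)) 0.
transitivity (\sum_k' \sum_b F k' b).
  rewrite pair_bigA mxE (reindex (@mxtens_index n d)) /=; first by apply: eq_bigr => -[].
  by exists (@mxtens_unindex n d) => idx _; [exact: mxtens_indexK | exact: mxtens_unindexK].
apply: eq_bigr => k' _; rewrite (bigD1 a) //= big1 => [|b ba]; rewrite /F tensmxE mxE.
  by rewrite eqxx mulr1 addr0.
by rewrite eq_sym (negbTE ba) mulr0 mul0r.
Qed.

Lemma Amat_gram_blk_eq0 m m1 m2 d Lf (x : 'cV[R]_(m * d)) (k : 'I_m) a :
  blk x k a 0 = 0 -> blk x k.+1 a 0 = 0 -> blk x k.+2 a 0 = 0 ->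
  blk ((Amat m m1 m2 d Lf)^T *m Amat m m1 m2 d Lf *m x) k.+1 a 0 = 0.
Proof.
move=> x0 x1 x2.
have x_near0 (k' : 'I_m) : (k' <= k.+1)%N -> (k <= k'.+1)%N -> x (mxtens_index (k', a)) 0 = 0.
  move=> k'k kk'; rewrite -blkE.
  by have [->|[->|->]] : k'.+1 = k \/ k'.+1 = k.+1 \/ k'.+1 = k.+2 by lia.
rewrite blkE Amat_gram -scalemxAl mxE tens1_mulmxE big1 ?mulr0 // => k' _.
have [-> | ] := eqVneq (((@JMC R m m1 m2)^T *m JMC m m1 m2) k k') 0; first by rewrite mul0r.
by case/(gram_neq0_near (@JMC_adjacent_support m m1 m2))/andP => k'k kk'; rewrite x_near0 ?mulr0.
Qed.

(* [linked j]: g contains the term ||x_j - x_(j+1)||_1 (1-based blocks). *)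
Definition linked m m1 m2 (j : nat) : bool :=
  [exists r : 'I_m.-1, (r \in Mset m m1 m2) && (r.+1 == j)%N].

Lemma linked_dvd m m1 m2 j : linked m m1 m2 j -> (m1 %| j)%N.
Proof.
case/existsP => r /andP[]; rewrite inE => /existsP[i /andP[_ /eqP ->]] /eqP <-.
exact: dvdn_mull.
Qed.

Lemma linked_nonconsecutive m m1 m2 j :
  (2 <= m1)%N -> linked m m1 m2 j -> ~~ linked m m1 m2 j.+1.
Proof.
move=> m1_ge2 /linked_dvd m1j; apply/negP => /linked_dvd.
by rewrite -addn1 dvdn_addr // dvdn1 => /eqP m1_1; rewrite m1_1 in m1_ge2.
Qed.

Definition cluster m m1 m2 (i j : nat) : bool :=
  [|| j == i, (j.+1 == i) && linked m m1 m2 j | (j == i.+1) && linked m m1 m2 i].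

Lemma cluster_linked m m1 m2 i j : (2 <= m1)%N -> linked m m1 m2 j ->
  cluster m m1 m2 i j = cluster m m1 m2 i j.+1.
Proof.
move=> m1_ge2 lj; have nlj1 := linked_nonconsecutive m1_ge2 lj.
rewrite /cluster lj (negbTE nlj1) andbT andbF eqSS.
have [ji1 | _] := eqVneq j i.+1.
  have /negbTE -> : ~~ linked m m1 m2 i.
    by apply: contraTN lj => /(linked_nonconsecutive m1_ge2); rewrite ji1.
  by rewrite ji1 !andbF; lia.
by case: eqVneq => [<-|]; rewrite ?lj ?andbT ?andbF; lia.
Qed.

Definition zero_on n (S : pred 'I_n) (z : 'cV[R]_n) : 'cV[R]_n :=
  \col_j (if S j then 0 else z j 0).

Lemma norm2_sqr n (z : 'cV[R]_n) : norm2 z ^+ 2 = \sum_j z j 0 ^+ 2.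
Proof. by rewrite sqr_sqrtr // sumr_ge0 // => j _; exact: sqr_ge0. Qed.

Lemma norm2_zero_on_lt n (S : pred 'I_n) (x z : 'cV[R]_n) j0 :
  (forall j, S j -> x j 0 = 0) -> S j0 -> z j0 0 != 0 ->
  norm2 (zero_on S z - x) ^+ 2 < norm2 (z - x) ^+ 2.
Proof.
move=> xS Sj0 zj0; rewrite !norm2_sqr (bigD1 j0) //= [X in _ < X](bigD1 j0) //=.
apply: ltr_leD.
  by rewrite !mxE Sj0 xS // subrr subr0 expr0n exprn_even_gt0.
apply: ler_sum => j _; rewrite !mxE; case: ifP => Sj //.
by rewrite xS // subrr expr0n sqr_ge0.
Qed.

Definition blk_coord m d (Z : pred nat) (a : 'I_d) : pred 'I_(m * d) :=
  fun idx => ((mxtens_unindex idx).2 == a) && Z (mxtens_unindex idx).1.+1.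

Lemma blk_zero_on m d Z a (z : 'cV[R]_(m * d)) j b :
  blk (zero_on (blk_coord Z a) z) j b 0 = if (b == a) && Z j then 0 else blk z j b 0.
Proof.
case: j => [|j]; first by rewrite /blk /= mxE if_same.
rewrite /blk; case: insubP => [k _ kj|_]; last by rewrite mxE if_same.
by rewrite !mxE /blk_coord mxtens_indexK /= kj.
Qed.

Lemma gfun_zero_on m m1 m2 d beta (Z : pred nat) a (z : 'cV[R]_(m * d)) :
  0 <= beta -> (forall j, linked m m1 m2 j -> Z j = Z j.+1) ->
  gfun m1 m2 beta (zero_on (blk_coord Z a) z) <= gfun m1 m2 beta z.
Proof.
move=> beta_ge0 Zlinked; rewrite /gfun ler_wpM2l //.
apply: ler_sum => r rM; apply: ler_sum => b _.
rewrite !mxE !blk_zero_on (Zlinked (val r).+1); last by apply/existsP; exists r; rewrite rM eqxx.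
by case: (_ && _); rewrite ?subrr ?normr0.
Qed.

Lemma prox_blk_eq0 m m1 m2 d beta eta (x xt : 'cV[R]_(m * d)) (k : 'I_m) a :
  (2 <= m1)%N -> 0 <= beta -> 0 < eta -> is_prox m1 m2 beta eta x xt ->
  blk x k a 0 = 0 -> blk x k.+1 a 0 = 0 -> blk x k.+2 a 0 = 0 ->
  blk xt k.+1 a 0 = 0.
Proof.
move=> m1_ge2 beta_ge0 eta_gt0 xt_prox x0 x1 x2; apply/eqP/negPn/negP => xt_neq0.
pose S : pred 'I_(m * d) := blk_coord (cluster m m1 m2 k.+1) a.
have xS idx : S idx -> x idx 0 = 0.
  case: (mxtens_indexP idx) => k' b; rewrite /S /blk_coord mxtens_indexK /= -blkE.
  by case/andP => /eqP -> /or3P[/eqP[->] | /andP[/eqP[->] _] | /andP[/eqP-> _]].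
have S_ka : S (mxtens_index (k, a)) by rewrite /S /blk_coord mxtens_indexK /= /cluster !eqxx.
have g_le : gfun m1 m2 beta (zero_on S xt) <= gfun m1 m2 beta xt.
  exact: gfun_zero_on beta_ge0 (fun j => cluster_linked k.+1 m1_ge2).
have xt_ka : xt (mxtens_index (k, a)) 0 != 0 by rewrite -blkE.
have q_lt := norm2_zero_on_lt xS S_ka xt_ka.
have := xt_prox (zero_on S xt); rewrite leNgt => /negP; apply.
by apply: ler_ltD => //; rewrite ltr_pM2l ?invr_gt0 ?mulr_gt0.
Qed.

End BlockSupports.

Theorem lemma8 (R : realType) (Lf beta eps : R) (m1 m2 m dbar : nat)
  (hLf : 0 < Lf) (hbeta : 0 < beta)
  (hm1 : (2 <= m1)%N) (hm2 : (1 <= m2)%N) (hev : ~~ odd (m1 * m2))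
  (hm : m = (3 * m1 * m2)%N)
  (hdbar5 : (5 <= dbar)%N) (hdbarodd : odd dbar)
  (heps : 0 < eps < 1)
  (hbeta_eps : beta > (50 * pi + 1 + opnorm (Amat m m1 m2 dbar Lf))
                        * Num.sqrt (m%:R) * eps)
  (x : 'cV[R]_(m * dbar)) :
  (forall i : nat, (1 <= i <= m)%N ->
     supp (blk ((Amat m m1 m2 dbar Lf)^T *m (Amat m m1 m2 dbar Lf) *m x) i)
       \subset supp (blk x i.-1) :|: supp (blk x i) :|: supp (blk x i.+1))
  /\
  (forall eta : R, 0 < eta ->
   forall xt : 'cV[R]_(m * dbar), is_prox m1 m2 beta eta x xt ->
   forall i : nat, (1 <= i <= m)%N ->
     supp (blk xt i)
       \subset supp (blk x i.-1) :|: supp (blk x i) :|: supp (blk x i.+1)).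
Proof.
split=> [i /blk_index[k ->] | eta eta_gt0 xt xt_prox i /blk_index[k ->]];
  apply: supp_subsetU3 => a x0 x1 x2.
- exact: Amat_gram_blk_eq0.
- exact: prox_blk_eq0 hm1 (ltW hbeta) eta_gt0 xt_prox x0 x1 x2.
Qed.
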